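(* Let $(\mathbf{P},d_{\mathbf{P}})$ be a finite metric poset and $M,N$ be $\mathbf{P}$-modules. If there exists a Galois coupling of $(M,N)$, then $\mathsf{Res}(P^M_\bullet,P^N_\bullet)\neq\varnothing$; moreover there exists $(E_\bullet,F_\bullet)\in\mathsf{Res}(P^M_\bullet,P^N_\bullet)$ admitting at least one matching.
   Context: Fix a field $k$; a finite poset is a category with a unique morphism $x\to y$ iff $x\le y$; a $\mathbf{P}$-module is a functor $\mathbf{P}\to$ (finite-dimensional $k$-vector spaces); $g^*$ is precomposition with a monotone map $g$. A Galois insertion $f:\mathbf{Q}\rightleftarrows\mathbf{P}:g$ consists of monotone maps with $f(u)\le x\iff u\le g(x)$ and $f\circ g=\mathrm{id}_{\mathbf{P}}$. A Galois coupling of $(M,N)$ is $(\mathbf{Q},f\dashv g,h\dashv i,\Gamma)$ with $\mathbf{Q}$ a finite poset, $f:\mathbf{Q}\rightleftarrows\mathbf{P}:g$, $h:\mathbf{Q}\rightleftarrows\mathbf{P}:i$ Galois insertions and a $\mathbf{Q}$-module $\Gamma$ with $g^*\Gamma\cong M$, $i^*\Gamma\cong N$. For $x\in\mathbf{P}$, $k[\mathbf{P}]_x$ is the module with value $k$ at $y\ge x$, $0$ elsewhere, identity maps (the indecomposable projectives). For $y\le x$, $\rho(x\ge y):k[\mathbf{P}]_x\to k[\mathbf{P}]_y$ is the canonical morphism (identity at each $z\ge x$), $0$ otherwise. For projectives with fixed decompositions $E=\bigoplus_{x\in\mathrm{smd}(E)}k[\mathbf{P}]_x$, $F=\bigoplus_{y\in\mathrm{smd}(F)}k[\mathbf{P}]_y$,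 each $\alpha:E\to F$ is uniquely $[a_{x,y}\rho(x\ge y)]$ with $a_{x,y}=0$ unless $x\ge y$; $\mathrm{Mat}(\alpha)=[a_{x,y}]$. Projective resolutions $E_\bullet=(E_i,\partial_i:E_{i+1}\to E_i)_{i\ge0}$ are taken with fixed decompositions of their terms, $|E_i|$ being the number of summands; $P^M_\bullet$ is a minimal projective resolution of $M$. $\mathsf{Res}(P^M_\bullet,P^N_\bullet)$ is the set of pairs $(E_\bullet,F_\bullet)$ of projective resolutions of $M$ and $N$ with $|E_i|=|F_i|$ for all $i$. A matching of $(E_\bullet,F_\bullet)$ is a family of bijections $B_i:\mathrm{smd}(E_i)\to\mathrm{smd}(F_i)$ such that the $(x',x)$-entry of $\mathrm{Mat}(\partial^E_i)$ equals the $(B_{i+1}(x'),B_i(x))$-entry of $\mathrm{Mat}(\partial^F_i)$ for all $i$, $x\in\mathrm{smd}(E_i)$, $x'\in\mathrm{smd}(E_{i+1})$. *)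

From HB Require Import structures.
From mathcomp Require Import all_boot all_order all_algebra.
Set Implicit Arguments.
Unset Strict Implicit.
Unset Printing Implicit Defensive.
Import Order.TTheory GRing.Theory.
Local Open Scope ring_scope.

Section PMod.
Variables (k : fieldType) (d : Order.disp_t) (P : finPOrderType d).

(* A P-module: a finite-dimensional k-space k^(pdim x) at each x, and for
   x <= y a linear map pmap x y : k^(pdim x) -> k^(pdim y), acting on ROW
   vectors (v |-> v *m pmap x y).  Values for x not <= y are irrelevant. *)
Record pmod := PMod {
  pdim : P -> nat;
  pmap : forall x y : P, 'M[k]_(pdim x, pdim y) }.

Definition is_pmod (M : pmod) : Prop :=
  (forall x, pmap M x x = 1%:M) /\
  (forall x y z, (x <= y)%O -> (y <= z)%O -> pmap M x y *m pmap M y z = pmap M x z).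

Definition pmor (M N : pmod) := forall x : P, 'M[k]_(pdim M x, pdim N x).

Definition is_pmor (M N : pmod) (phi : pmor M N) : Prop :=
  forall x y, (x <= y)%O -> pmap M x y *m phi y = phi x *m pmap N x y.

Definition pmod_iso (M N : pmod) : Prop :=
  exists (phi : pmor M N) (psi : pmor N M),
    is_pmor phi /\ is_pmor psi /\
    (forall x, phi x *m psi x = 1%:M) /\ (forall x, psi x *m phi x = 1%:M).

Definition supp (n : nat) (lab : 'I_n -> P) (z : P) : {pred 'I_n} :=
  [pred j | (lab j <= z)%O].

(* E = (+)_{j < n} k[P]_{lab j}, the projective with fixed decomposition *)
Definition free_mod (n : nat) (lab : 'I_n -> P) : pmod :=
  @PMod (fun z => #|supp lab z|)
    (fun z w => \matrix_(a, b)
        ((@enum_val _ (supp lab z) a == @enum_val _ (supp lab w) b)%:R)).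

(* the morphism E -> F with Mat = A, i.e. [A x' x rho(x' >= x)] *)
Definition induced (n m : nat) (la : 'I_n -> P) (lb : 'I_m -> P)
  (A : 'M[k]_(n, m)) : pmor (free_mod la) (free_mod lb) :=
  fun z => \matrix_(a, b) A (@enum_val _ (supp la z) a) (@enum_val _ (supp lb z) b).

(* A projective chain E_1 -> E_0 with fixed decompositions:
   E_i has rsz i summands labelled rlab i, and partial_i : E_{i+1} -> E_i
   has matrix rdif i (rows: summands of E_{i+1}, columns: summands of E_i). *)
Record pres := PRes {
  rsz : nat -> nat;
  rlab : forall i, 'I_(rsz i) -> P;
  rdif : forall i, 'M[k]_(rsz i.+1, rsz i) }.

Definition is_proj_resolution (M : pmod) (E : pres) : Prop :=
  (forall i (x' : 'I_(rsz E i.+1)) (x : 'I_(rsz E i)), rdif E i x' x != 0 -> (@rlab E i x <= @rlab E i.+1 x')%O) /\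
  exists eps : pmor (free_mod (@rlab E 0)) M,
    is_pmor eps /\
    (forall z, row_full (eps z)) /\
    (forall z, (induced (@rlab E 1) (@rlab E 0) (rdif E 0) z == kermx (eps z))%MS) /\
    (forall i z, (induced (@rlab E i.+2) (@rlab E i.+1) (rdif E i.+1) z
                  == kermx (induced (@rlab E i.+1) (@rlab E i) (rdif E i) z))%MS).

Definition in_Res (M N : pmod) (E F : pres) : Prop :=
  is_proj_resolution M E /\ is_proj_resolution N F /\ (forall i, rsz E i = rsz F i).

Definition has_matching (E F : pres) : Prop :=
  exists B : forall i, 'I_(rsz E i) -> 'I_(rsz F i),
    (forall i, bijective (B i)) /\
    (forall i (x' : 'I_(rsz E i.+1)) (x : 'I_(rsz E i)),
        rdif E i x' x = rdif F i (B i.+1 x') (B i x)).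

End PMod.

Definition pullback (k : fieldType) (dQ dP : Order.disp_t)
  (Q : finPOrderType dQ) (P : finPOrderType dP) (g : Q -> P) (M : pmod k P)
  : pmod k Q :=
  @PMod k dQ Q (fun u => pdim M (g u)) (fun u v => pmap M (g u) (g v)).

Definition galois_insertion (dQ dP : Order.disp_t)
  (Q : finPOrderType dQ) (P : finPOrderType dP) (f : Q -> P) (g : P -> Q) : Prop :=
  (forall u v, (u <= v)%O -> (f u <= f v)%O) /\
  (forall x y, (x <= y)%O -> (g x <= g y)%O) /\
  (forall u x, (f u <= x)%O <-> (u <= g x)%O) /\
  (forall x, f (g x) = x).

Definition galois_coupling_exists (k : fieldType) (d : Order.disp_t)
  (P : finPOrderType d) (M N : pmod k P) : Prop :=
  exists (dQ : Order.disp_t) (Q : finPOrderType dQ)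
         (f : Q -> P) (g : P -> Q) (h : Q -> P) (i : P -> Q) (Gam : pmod k Q),
    galois_insertion f g /\ galois_insertion h i /\ is_pmod Gam /\
    pmod_iso (pullback g Gam) M /\ pmod_iso (pullback i Gam) N.

From Pilot Require Import Defs.
From HB Require Import structures.
From mathcomp Require Import all_boot all_order all_algebra.
From Stdlib Require Import FunctionalExtensionality.

(* Let f -| g be a Galois insertion Q -> P.  Since f u <= x iff u <= g x, the
   pullback g^* k[Q]_u is the free module k[P]_(f u), and pulling back is exact
   (it is computed pointwise).  So relabelling the summands of any projective
   resolution of Gamma by f gives a projective resolution of g^* Gamma ~ M, and
   relabelling the same resolution by h gives one of i^* Gamma ~ N.  Both have
   literally the same differential matrices, so the identity is a matching.
   A resolution of Gamma exists because every submodule S of a free module is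
   the image of the free module with one summand k[Q]_x for each x and each
   coordinate vector of the ambient space, mapped to the rows of S x. *)

Set Implicit Arguments.
Unset Strict Implicit.
Unset Printing Implicit Defensive.
Import Order.TTheory GRing.Theory.
Local Open Scope ring_scope.

Section SelectionMatrix.
Variable k : fieldType.
Implicit Types (n m : nat).

Definition sel_mx n (p : {pred 'I_n}) : 'M[k]_(#|p|, n) :=
  \matrix_(a, j) (enum_val a == j)%:R.

Lemma mul_sel_mx n (p : {pred 'I_n}) m (X : 'M[k]_(n, m)) :
  sel_mx p *m X = \matrix_(a, c) X (enum_val a) c.
Proof.
apply/matrixP => a c; rewrite !mxE (bigD1 (enum_val a)) //= big1 ?addr0.
  by rewrite mxE eqxx mul1r.
by move=> j /negbTE nj; rewrite mxE eq_sym nj mul0r.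
Qed.

Lemma row_mul_sel_mx n (p : {pred 'I_n}) m (X : 'M[k]_(n, m)) a :
  row a (sel_mx p *m X) = row (enum_val a) X.
Proof. by rewrite mul_sel_mx; apply/rowP => c; rewrite !mxE. Qed.

Lemma mulmx_sel_mxT n (p : {pred 'I_n}) m (X : 'M[k]_(m, n)) :
  X *m (sel_mx p)^T = \matrix_(i, b) X i (enum_val b).
Proof.
apply/matrixP => i b; rewrite !mxE (bigD1 (enum_val b)) //= big1 ?addr0.
  by rewrite !mxE eqxx mulr1.
by move=> j /negbTE nj; rewrite !mxE eq_sym nj mulr0.
Qed.

Lemma sel_mx_mulT n (p q : {pred 'I_n}) :
  sel_mx p *m (sel_mx q)^T = \matrix_(a, b) (enum_val a == enum_val b)%:R.
Proof. by rewrite mul_sel_mx; apply/matrixP => a b; rewrite !mxE eq_sym. Qed.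

Lemma sel_mx_mulT_id n (p : {pred 'I_n}) : sel_mx p *m (sel_mx p)^T = 1%:M.
Proof.
by rewrite sel_mx_mulT; apply/matrixP => a b; rewrite !mxE (inj_eq enum_val_inj).
Qed.

Lemma mulmx_sel_mx_notin n (p : {pred 'I_n}) m (X : 'M[k]_(m, #|p|)) i j :
  j \notin p -> (X *m sel_mx p) i j = 0.
Proof.
move=> jNp; rewrite mxE big1 // => a _; rewrite mxE.
have [ej|] := eqVneq (enum_val a) j; last by rewrite mulr0.
by case/negP: jNp; rewrite -ej enum_valP.
Qed.

Lemma sel_mxT_mul n (p : {pred 'I_n}) :
  (sel_mx p)^T *m sel_mx p = \matrix_(i, j) ((i \in p) && (i == j))%:R.
Proof.
apply/matrixP => i j; rewrite !mxE.
have [ip|iNp] := boolP (i \in p) => /=; last first.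
  rewrite big1 // => a _; rewrite !mxE.
  have [ei|] := eqVneq (enum_val a) i; last by rewrite mul0r.
  by case/negP: iNp; rewrite -ei enum_valP.
rewrite (bigD1 (enum_rank_in ip i)) //= big1 ?addr0 => [|a na]; rewrite !mxE.
  by rewrite enum_rankK_in // eqxx mul1r.
have [ei|] := eqVneq (enum_val a) i; last by rewrite mul0r.
by case/eqP: na; apply: enum_val_inj; rewrite enum_rankK_in.
Qed.

Lemma mulmx_sel_mx_proj n (p : {pred 'I_n}) m (X : 'M[k]_(m, n)) :
  X *m ((sel_mx p)^T *m sel_mx p) = \matrix_(i, j) (X i j * (j \in p)%:R).
Proof.
rewrite sel_mxT_mul; apply/matrixP => i j; rewrite !mxE (bigD1 j) //= big1 ?addr0.
  by rewrite mxE eqxx andbT.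
by move=> j' /negbTE nj'; rewrite mxE nj' andbF mulr0.
Qed.

Lemma sel_mx_proj_sub n (p q : {pred 'I_n}) : {subset p <= q} ->
  sel_mx p *m ((sel_mx q)^T *m sel_mx q) = sel_mx p.
Proof.
move=> sub_pq; rewrite mulmx_sel_mx_proj; apply/matrixP => a j; rewrite !mxE.
by have [<-|] := eqVneq (enum_val a) j; rewrite ?mul0r // sub_pq ?enum_valP ?mulr1.
Qed.

End SelectionMatrix.

Lemma kermx_mulmx_free (F : fieldType) m n p (A : 'M[F]_(m, n)) (B : 'M_(n, p)) :
  row_free B -> (kermx (A *m B) :=: kermx A)%MS.
Proof.
move=> freeB; apply/eqmxP; rewrite !sub_kermx -(mulmx_free_eq0 _ freeB).
by rewrite -[_ *m A *m B]mulmxA mulmx_ker [kermx A *m _]mulmxA mulmx_ker mul0mx eqxx.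
Qed.

Section FreeModules.
Variables (k : fieldType) (d : Order.disp_t) (P : finPOrderType d).
Implicit Types (n m : nat).

Lemma pmap_free_mod n (lab : 'I_n -> P) x y :
  Defs.pmap (free_mod k lab) x y = sel_mx k (supp lab x) *m (sel_mx k (supp lab y))^T.
Proof. by rewrite sel_mx_mulT. Qed.

Lemma induced_sel_mx n m (la : 'I_n -> P) (lb : 'I_m -> P) (A : 'M[k]_(n, m)) z :
  induced la lb A z = sel_mx k (supp la z) *m A *m (sel_mx k (supp lb z))^T.
Proof.
by rewrite -mulmxA mul_sel_mx mulmx_sel_mxT; apply/matrixP => a b; rewrite !mxE.
Qed.

Lemma supp_sub n (lab : 'I_n -> P) x y : (x <= y)%O ->
  {subset supp lab x <= supp lab y}.
Proof. by move=> le_xy j /le_trans; apply. Qed.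

Definition compatible_mx n m (la : 'I_n -> P) (lb : 'I_m -> P) (A : 'M[k]_(n, m)) :=
  forall a b, A a b != 0 -> (lb b <= la a)%O.

Lemma induced_pmor n m (la : 'I_n -> P) (lb : 'I_m -> P) (A : 'M[k]_(n, m)) :
  compatible_mx la lb A -> is_pmor (induced la lb A).
Proof.
move=> compA x y le_xy; rewrite !induced_sel_mx !pmap_free_mod.
set Sx := sel_mx k (supp la x); set Sy := sel_mx k (supp la y).
set Tx := sel_mx k (supp lb x); set Ty := sel_mx k (supp lb y).
have -> : Sx *m Sy^T *m (Sy *m A *m Ty^T) = Sx *m A *m Ty^T.
  by rewrite !mulmxA -(mulmxA Sx) sel_mx_proj_sub //; apply: supp_sub.
have Tx_proj : Sx *m (A *m (Tx^T *m Tx)) = Sx *m A.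
  rewrite !mul_sel_mx mulmx_sel_mx_proj; apply/matrixP => a b; rewrite !mxE.
  have [->|nzA] := eqVneq (A (enum_val a) b) 0; first by rewrite mul0r.
  have b_x : b \in supp lb x := le_trans (compA _ _ nzA) (enum_valP a).
  by rewrite b_x mulr1.
by rewrite -[in LHS]Tx_proj !mulmxA.
Qed.

Lemma kermx_pmor_sub (M N : pmod k P) (phi : pmor M N) x y :
  is_pmor phi -> (x <= y)%O ->
  (kermx (phi x) *m Defs.pmap M x y <= kermx (phi y))%MS.
Proof.
by move=> phiP le_xy; apply/sub_kermxP; rewrite -mulmxA phiP // mulmxA mulmx_ker mul0mx.
Qed.

End FreeModules.

Section Cover.
Variables (k : fieldType) (d : Order.disp_t) (P : finPOrderType d).
Variables (n : nat) (lab : 'I_n -> P) (S : forall z : P, 'M[k]_(#|supp lab z|)).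

Definition cover_size := #|{: P * 'I_n}|.

Definition cover_lab (a : 'I_cover_size) : P := (enum_val a).1.

Definition ambient_mx x : 'M[k]_n :=
  (sel_mx k (supp lab x))^T *m (S x *m sel_mx k (supp lab x)).

Definition cover_mx : 'M[k]_(cover_size, n) :=
  \matrix_(a, j) ambient_mx (enum_val a).1 (enum_val a).2 j.

Lemma row_cover_mx a : row a cover_mx = row (enum_val a).2 (ambient_mx (enum_val a).1).
Proof. by apply/rowP => j; rewrite !mxE. Qed.

Lemma cover_mx_compatible : compatible_mx cover_lab lab cover_mx.
Proof.
move=> a j; rewrite mxE /ambient_mx mulmxA.
by have [//|jN] := boolP (j \in supp lab (enum_val a).1); rewrite mulmx_sel_mx_notin ?eqxx.
Qed.

Hypothesis S_sub :
  forall x z, (x <= z)%O -> (S x *m Defs.pmap (free_mod k lab) x z <= S z)%MS.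

Lemma induced_cover_mx z : (induced cover_lab lab cover_mx z == S z)%MS.
Proof.
rewrite induced_sel_mx; apply/andP; split.
  apply/row_subP => a; rewrite -mulmxA row_mul_sel_mx row_mul row_cover_mx -row_mul.
  apply: submx_trans (row_sub _ _) _.
  rewrite /ambient_mx -!mulmxA -pmap_free_mod; apply/mulmx_sub/S_sub.
  exact: (enum_valP a).
have S_ambient : S z = sel_mx k (supp lab z) *m (ambient_mx z *m (sel_mx k (supp lab z))^T).
  by rewrite /ambient_mx -!mulmxA sel_mx_mulT_id mulmx1 mulmxA sel_mx_mulT_id mul1mx.
rewrite {1}S_ambient; apply/mulmx_sub/row_subP => j.
pose a : 'I_cover_size := enum_rank (z, j).
have a_val : enum_val a = (z, j) := enum_rankK _.
have a_z : a \in supp cover_lab z by rewrite inE /cover_lab a_val.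
apply: (eq_row_sub (enum_rank_in a_z a)).
by rewrite -mulmxA row_mul_sel_mx row_mul enum_rankK_in // row_cover_mx a_val [RHS]row_mul.
Qed.

End Cover.

Section CoverResolution.
Variables (k : fieldType) (d : Order.disp_t) (P : finPOrderType d) (G : pmod k P).
Hypothesis G_pmod : is_pmod G.

Definition gen_size := #|{: {x : P & 'I_(pdim G x)}}|.

Definition gen_lab (a : 'I_gen_size) : P := tag (enum_val a).

Definition gen_eps : pmor (free_mod k gen_lab) G := fun y =>
  sel_mx k (supp gen_lab y) *m
  \matrix_(a, c) Defs.pmap G (tag (enum_val a)) y (tagged (enum_val a)) c.

Lemma gen_eps_pmor : is_pmor gen_eps.
Proof.
move=> x y le_xy; rewrite pmap_free_mod /gen_eps !mulmxA -(mulmxA (sel_mx _ _)).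
rewrite sel_mx_proj_sub; last exact: supp_sub.
rewrite -mulmxA !mul_sel_mx; apply/matrixP => a c; rewrite !mxE.
have le_ax : (tag (enum_val (enum_val a)) <= x)%O := enum_valP a.
rewrite -(proj2 G_pmod _ _ _ le_ax le_xy) mxE.
by apply: eq_bigr => b _; rewrite mxE.
Qed.

Lemma gen_eps_full z : row_full (gen_eps z).
Proof.
rewrite -sub1mx; apply/row_subP => c.
pose a : 'I_gen_size := enum_rank (Tagged (fun x => 'I_(pdim G x)) c).
have a_val : enum_val a = Tagged (fun x => 'I_(pdim G x)) c := enum_rankK _.
have a_z : a \in supp gen_lab z by rewrite inE /gen_lab a_val.
apply: (eq_row_sub (enum_rank_in a_z a)).
rewrite /gen_eps row_mul_sel_mx enum_rankK_in //; apply/rowP => c'.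
by rewrite !mxE a_val /= (proj1 G_pmod z) mxE.
Qed.

Record stage := Stage {
  stage_size : nat;
  stage_lab : 'I_stage_size -> P;
  stage_mx : 'M[k]_(cover_size P stage_size, stage_size) }.

Definition next_stage (s : stage) : stage :=
  Stage (@cover_lab _ P _)
    (cover_mx (fun z => kermx (induced (@cover_lab _ P _) (@stage_lab s) (stage_mx s) z))).

Definition first_stage : stage := Stage gen_lab (cover_mx (fun z => kermx (gen_eps z))).

Definition cover_resolution : pres k P :=
  let s i := iter i next_stage first_stage in
  PRes (fun i => @stage_lab (s i)) (fun i => stage_mx (s i)).

Lemma cover_resolution_compatible i :
  compatible_mx (@rlab _ _ _ cover_resolution i.+1) (@rlab _ _ _ cover_resolution i)
    (rdif cover_resolution i).
Proof. by case: i => [|i]; apply: cover_mx_compatible. Qed.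

Lemma cover_resolutionP : is_proj_resolution G cover_resolution.
Proof.
split; first exact: cover_resolution_compatible.
exists gen_eps; split; first exact: gen_eps_pmor.
split; first exact: gen_eps_full.
split=> [|i] z; apply: induced_cover_mx => x y.
  exact: kermx_pmor_sub gen_eps_pmor.
exact: kermx_pmor_sub (induced_pmor (@cover_resolution_compatible i)).
Qed.

End CoverResolution.

Section SupportedResolution.
Variables (k : fieldType) (d : Order.disp_t) (P : finPOrderType d).

(* [free_mod k lab] is [sel_mod (supp lab)] by conversion; abstracting the supports
   lets them be rewritten along a Galois insertion in [relabel_proj_resolution]. *)
Definition sel_mod n (S : P -> {pred 'I_n}) : pmod k P :=
  @PMod k d P (fun z => #|S z|) (fun z w => \matrix_(a, b) (enum_val a == enum_val b)%:R).

Definition sel_mor n m (S : P -> {pred 'I_n}) (T : P -> {pred 'I_m})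
    (A : 'M[k]_(n, m)) : pmor (sel_mod S) (sel_mod T) :=
  fun z => \matrix_(a, b) A (enum_val a) (enum_val b).

Definition sel_resolution (M : pmod k P) (sz : nat -> nat)
    (S : forall i, P -> {pred 'I_(sz i)}) (A : forall i, 'M[k]_(sz i.+1, sz i)) :=
  exists eps : pmor (sel_mod (S 0)) M,
    [/\ is_pmor eps, forall z, row_full (eps z),
        forall z, (sel_mor (S 1) (S 0) (A 0) z == kermx (eps z))%MS &
        forall i z, (sel_mor (S i.+2) (S i.+1) (A i.+1) z
                     == kermx (sel_mor (S i.+1) (S i) (A i) z))%MS].

Lemma proj_resolutionE (M : pmod k P) (E : pres k P) :
  is_proj_resolution M E <->
  (forall i, compatible_mx (@rlab _ _ _ E i.+1) (@rlab _ _ _ E i) (rdif E i)) /\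
  sel_resolution M (fun i => supp (@rlab _ _ _ E i)) (rdif E).
Proof.
by split=> [[? [eps [? [? [? ?]]]]]|[? [eps [? ? ? ?]]]]; split=> //; exists eps.
Qed.

Lemma sel_resolution_iso (M M' : pmod k P) sz S A :
  @sel_resolution M sz S A -> pmod_iso M M' -> sel_resolution M' S A.
Proof.
case=> eps [epsP eps_full eps_ker exactA] [phi [psi [phiP [_ [phi_psi psi_phi]]]]].
have free_phi z : row_free (phi z) by apply/row_freeP; exists (psi z); apply: phi_psi.
have full_phi z : row_full (phi z) by apply/row_fullP; exists (psi z); apply: psi_phi.
exists (fun z => eps z *m phi z); split=> // [x y le_xy | z | z].
- by rewrite mulmxA epsP // -!mulmxA phiP.
- by rewrite /row_full (eqmxMfull _ (eps_full z)); apply: full_phi.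
- apply/eqmxP/(eqmx_trans (eqmxP (eps_ker z))).
  exact/eqmx_sym/kermx_mulmx_free.
Qed.

End SupportedResolution.

Lemma sel_resolution_pullback (k : fieldType) (dQ dP : Order.disp_t)
    (Q : finPOrderType dQ) (P : finPOrderType dP) (g : P -> Q) (G : pmod k Q) sz S A :
  {homo g : x y / (x <= y)%O} ->
  @sel_resolution k _ Q G sz S A -> sel_resolution (pullback g G) (fun i => S i \o g) A.
Proof.
move=> g_homo [eps [epsP eps_full eps_ker exactA]].
exists (fun z => eps (g z)); split=> [x y /g_homo|z|z|i z].
- exact: epsP.
- exact: eps_full.
- exact: eps_ker.
- exact: exactA.
Qed.

Section Relabel.
Variables (k : fieldType) (dQ dP : Order.disp_t).
Variables (Q : finPOrderType dQ) (P : finPOrderType dP).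

Definition relabel (f : Q -> P) (E : pres k Q) : pres k P :=
  PRes (fun i => f \o @rlab _ _ _ E i) (rdif E).

Lemma supp_galois (f : Q -> P) (g : P -> Q) n (lab : 'I_n -> Q) :
  galois_insertion f g -> supp (f \o lab) = supp lab \o g.
Proof.
case=> _ [_ [adj_fg _]]; apply: functional_extensionality => z.
by apply: functional_extensionality => j; apply/idP/idP => /adj_fg.
Qed.

Lemma relabel_proj_resolution (f : Q -> P) (g : P -> Q) (G : pmod k Q)
    (M : pmod k P) (E : pres k Q) :
  galois_insertion f g -> is_proj_resolution G E -> pmod_iso (pullback g G) M ->
  is_proj_resolution M (relabel f E).
Proof.
move=> fg /proj_resolutionE[compE resE] isoM; apply/proj_resolutionE; split.
  by move=> i a b /compE; apply: (proj1 fg).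
have -> : (fun i => supp (@rlab _ _ _ (relabel f E) i)) =
          (fun i => supp (@rlab _ _ _ E i) \o g).
  by apply: functional_extensionality_dep => i; apply: supp_galois.
by apply: sel_resolution_iso isoM; apply: sel_resolution_pullback (proj1 (proj2 fg)) resE.
Qed.

Lemma relabel_matching (f h : Q -> P) (E : pres k Q) :
  has_matching (relabel f E) (relabel h E).
Proof. by exists (fun i => id); split=> // i; exists id. Qed.

End Relabel.

Theorem corollary5p3 (k : fieldType) (d : Order.disp_t) (P : finPOrderType d)
  (M N : pmod k P) :
  is_pmod M -> is_pmod N -> galois_coupling_exists M N ->
  (exists E F : pres k P, in_Res M N E F) /\
  (exists E F : pres k P, in_Res M N E F /\ has_matching E F).
Proof.
move=> _ _ [dQ [Q [f [g [h [i [Gam [fg [hi [Gam_pmod [isoM isoN]]]]]]]]]]].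
pose R := cover_resolution Gam.
have resGam : is_proj_resolution Gam R := cover_resolutionP Gam_pmod.
have inRes : in_Res M N (relabel f R) (relabel h R).
  split; first exact: relabel_proj_resolution fg resGam isoM.
  by split; first exact: relabel_proj_resolution hi resGam isoN.
split; exists (relabel f R), (relabel h R) => //.
by split=> //; apply: relabel_matching.
Qed.
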